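(* Let $L$ be a finite monolithic primitive group whose socle $N$ is non-abelian, let $k'$ be a positive integer, and let $L_{k'}$ be the crown-based power of $L$ of size $k'$, whose socle is $N^{k'}$. If $H'$ is a core-free subgroup of $L_{k'}$ with $H'\le N^{k'}$, then $|N^{k'}:H'|\ge 5^{k'}$.
   Context: All groups are finite. A group $L$ is primitive if it has a maximal subgroup with trivial core; it is monolithic primitive if moreover it has a unique minimal normal subgroup, its socle $N=\mathrm{soc}(L)$. For a positive integer $k$, the crown-based power of $L$ of size $k$ is $L_k:=\{(l_1,\ldots,l_k)\in L^k\mid l_1\equiv\cdots\equiv l_k \pmod N\}=N^k\,\mathrm{diag}(L^k)$. A subgroup $H'$ of a group $G$ is core-free if $\bigcap_{g\in G}(H')^g=1$. *)

From HB Require Import structures.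
From mathcomp Require Import all_boot all_fingroup all_solvable.
Set Implicit Arguments. Unset Strict Implicit. Unset Printing Implicit Defensive.
Local Open Scope group_scope.

Definition gpow (gT : finGroupType) (k : nat) := {ffun 'I_k -> gT}.

Section GPow.
Variables (gT : finGroupType) (k : nat).
HB.instance Definition _ := Finite.on (gpow gT k).

Definition gpow_mul (x y : gpow gT k) : gpow gT k := [ffun i => x i * y i].
Definition gpow_one : gpow gT k := [ffun => 1].
Definition gpow_inv (x : gpow gT k) : gpow gT k := [ffun i => (x i)^-1].

Lemma gpow_mulA : associative gpow_mul.
Proof. by move=> x y z; apply/ffunP=> i; rewrite !ffunE mulgA. Qed.
Lemma gpow_mul1 : left_id gpow_one gpow_mul.
Proof. by move=> x; apply/ffunP=> i; rewrite !ffunE mul1g. Qed.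
Lemma gpow_mulV : left_inverse gpow_one gpow_inv gpow_mul.
Proof. by move=> x; apply/ffunP=> i; rewrite !ffunE mulVg. Qed.

HB.instance Definition _ :=
  Finite_isGroup.Build (gpow gT k) gpow_mulA gpow_mul1 gpow_mulV.
End GPow.

Definition primitive (gT : finGroupType) (L : {set gT}) :=
  exists2 M : {group gT}, maximal M L & gcore M L = 1.

Definition unique_minnormal (gT : finGroupType) (L N : {set gT}) :=
  [/\ N <| L, minnormal N L &
      forall M : {group gT}, M <| L -> minnormal M L -> M :=: N].

Definition monolithic_primitive (gT : finGroupType) (L N : {set gT}) :=
  primitive L /\ unique_minnormal L N.

Definition setpow (gT : finGroupType) (k : nat) (N : {set gT}) : {set gpow gT k} :=
  [set x : gpow gT k | [forall i, x i \in N]].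

Definition crown_power (gT : finGroupType) (k : nat) (L N : {set gT})
  : {set gpow gT k} :=
  [set x : gpow gT k | [forall i, x i \in L] &&
                       [forall i, forall j, (x i)^-1 * x j \in N]].

From mathcomp Require Import all_boot all_fingroup all_solvable.
From mathcomp Require Import integral_char.
Set Implicit Arguments. Unset Strict Implicit. Unset Printing Implicit Defensive.
Local Open Scope group_scope.

(* The socle N is a direct product of copies of a nonabelian simple group, so
   N^k is a direct product of nonabelian simple factors, and core-freeness of
   H forces, in each of the k coordinates, a factor not contained in H.  It
   then suffices to show 5^c |H| <= |G| for every subgroup H of a direct
   product G of nonabelian simple groups, c being the number of factors not
   contained in H.  Induct on the number of factors, splitting G = T x B.
   If T <= H or T is not contained in HB, then |H| = |H :&: B| |T :&: HB|, and
   a proper subgroup of T has index >= 5, since by Burnside's p^a q^b theorem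
   some prime p >= 5 divides |T|.  Otherwise H :&: T = 1, so |H| = |B :&: HT|,
   and at most one factor of B lies in B :&: HT but not in H (two such would
   make T abelian); the two factors lost in the count are paid for by
   |T| >= 25. *)

Section SimpleNonabelian.
Variables (gT : finGroupType) (G : {group gT}).
Hypotheses (simG : simple G) (nabG : ~~ abelian G).

Lemma simple_nonabelian_prime_ge5 : exists2 p, prime p & (5 <= p) && (p %| #|G|).
Proof.
have three_primes : 2 < size (primes #|G|).
  rewrite ltnNge; apply: contra nabG => /Burnside_p_a_q_b solG.
  exact/cyclic_abelian/prime_cyclic/simple_sol_prime.
have /hasP[p]: has (leq 5) (primes #|G|).
  apply: contraLR three_primes => /hasPn small; rewrite -leqNgt.
  apply: (@uniq_leq_size _ _ [:: 2; 3]) => [|p]; first exact: primes_uniq.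
  move=> Gp; have := small p Gp; move: Gp; rewrite mem_primes => /andP[pr _].
  by rewrite -ltnNge; move: p pr; do 5!case=> //.
by rewrite mem_primes => /and3P[pr _ pG] p5; exists p; rewrite ?p5.
Qed.

Lemma simple_gcore_proper (K : {group gT}) : K \proper G -> gcore K G = 1.
Proof.
move=> prKG; have /simpleP[_ simG'] := simG.
have [//|coreG] := simG' _ (gcore_normal (proper_sub prKG)).
by case/andP: prKG => _; rewrite -coreG gcore_sub.
Qed.

(* If 5 |K| > |G|, an element x of prime order p >= 5 lies in every conjugate
   K :^ g, as otherwise |<[x]> * K :^ g| = p |K| > |G|; but the core is trivial. *)
Lemma simple_nonabelian_index_ge5 (K : {group gT}) : K \proper G -> 5 * #|K| <= #|G|.
Proof.
move=> prKG; have [p pr /andP[p_ge5 pG]] := simple_nonabelian_prime_ge5.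
have [x Gx ox] := Cauchy pr pG.
rewrite leqNgt; apply/negP=> small.
suff : <[x]> \subset gcore K G.
  rewrite simple_gcore_proper // subG1 trivg_card1 -orderE ox => /eqP p1.
  by rewrite p1 in pr.
apply/bigcapsP=> g Gg; apply: contraLR small => not_sub; rewrite -leqNgt.
have /TI_cardMg : <[x]> :&: K :^ g = 1 by apply: prime_TIg; rewrite -?orderE ?ox.
rewrite cardJg -orderE ox => cardM.
apply: leq_trans (leq_mul p_ge5 (leqnn _)) _; rewrite -cardM subset_leq_card //.
by rewrite mulG_subG cycle_subG Gx -(normsP (normG G) g Gg) conjSg proper_sub.
Qed.

Lemma simple_nonabelian_card_ge25 : 25 <= #|G|.
Proof.
have [p pr /andP[p_ge5 pG]] := simple_nonabelian_prime_ge5.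
have [x Gx ox] := Cauchy pr pG.
have prxG : <[x]> \proper G.
  rewrite properEneq cycle_subG Gx andbT; apply: contraNneq nabG => <-.
  exact: cycle_abelian.
apply: leq_trans (simple_nonabelian_index_ge5 prxG).
by rewrite -orderE ox (leq_mul (leqnn 5) p_ge5).
Qed.

End SimpleNonabelian.

Section Products.
Variable gT : finGroupType.
Implicit Types G H K X Y Z : {group gT}.

Lemma card_sub_dprod X Y G H : X \x Y = G -> H \subset G ->
  #|H| = (#|H :&: Y| * #|X :&: (H <*> Y)|)%N.
Proof.
move=> defG sHG; have [[_ _ _ _] defXY cXY tiXY] := dprodP defG.
have nYH : H \subset 'N(Y).
  exact: subset_trans sHG (normal_norm (dprod_normal2 defG).2).
have sHYG : H <*> Y \subset X * Y by rewrite defXY join_subG sHG -defXY mulG_subr.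
have defHY : (H <*> Y :&: X) * Y = H <*> Y.
  by rewrite group_modr ?joing_subr //; apply/setIidPl.
have tiY : (H <*> Y :&: X) :&: Y = 1.
  by apply/trivgP; rewrite -tiXY setSI ?subsetIr.
apply/eqP; rewrite -(eqn_pmul2r (cardG_gt0 Y)) mul_cardG -norm_joinEl //.
by rewrite -{1}defHY TI_cardMg // [X :&: _]setIC mulnAC (mulnC #|H :&: Y|).
Qed.

Lemma simple_TI_or_sub X H K : simple X ->
  H \subset 'N(X) -> H \subset 'N(K) -> X \subset H <*> 'C(X) ->
  X :&: K = 1 \/ X \subset K.
Proof.
move=> /simpleP[_ simX] nXH nKH sX_HC.
have nXK : X :&: K <| X.
  rewrite /normal subsetIl (subset_trans sX_HC) // join_subG normsI ?normG //.
  exact/cents_norm/centS/subsetIl.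
by case: (simX _ nXK) => [-> | eXK]; [left | right; rewrite -eXK subsetIr].
Qed.

(* Writing t = h y and u = h' z, the elements h h' (h' h)^-1 and t u (u t)^-1
   coincide because y and z centralize X and each other, so both lie in
   H :&: X = 1. *)
Lemma abelian_two_diagonals H X Y Z :
  H :&: X = 1 -> X \subset H * Y -> X \subset H * Z ->
  Y \subset 'C(X) -> Z \subset 'C(X) -> Z \subset 'C(Y) -> abelian X.
Proof.
move=> tiHX sX_HY sX_HZ cXY cXZ cYZ; apply/centsP=> t Xt u Xu.
have [h y Hh Yy def_t] := mulsgP (subsetP sX_HY t Xt).
have [h' z Hh' Zz def_u] := mulsgP (subsetP sX_HZ u Xu).
have cyu : commute y^-1 u by apply: (centsP cXY); rewrite ?groupV.
have czt : commute z^-1 t by apply: (centsP cXZ); rewrite ?groupV.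
have czy : commute z^-1 y^-1 by apply: (centsP cYZ); rewrite ?groupV.
have {def_t}def_h : h = t * y^-1 by rewrite def_t mulgK.
have {def_u}def_h' : h' = u * z^-1 by rewrite def_u mulgK.
have hh' : h * h' = t * u * (y^-1 * z^-1).
  by rewrite def_h def_h' !mulgA -(mulgA t) cyu !mulgA.
have h'h : h' * h = u * t * (y^-1 * z^-1).
  by rewrite def_h def_h' !mulgA -(mulgA u) czt -!mulgA czy.
have comm_hh' : h * h' * (h' * h)^-1 = t * u * (u * t)^-1.
  by rewrite hh' h'h invMg mulgA mulgK.
have : t * u * (u * t)^-1 \in H :&: X by rewrite inE -{1}comm_hh' !(groupM, groupV).
by rewrite tiHX => /set1P/eqP; rewrite -eq_mulgV1 => /eqP.
Qed.

End Products.

Section SimpleFactors.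
Variables (gT : finGroupType) (I : finType) (T : I -> {group gT}).
Implicit Types (P : {set I}) (A E : {set gT}) (G H K : {group gT}).

Definition nfactors_out P (A : {set gT}) := #|[set i in P | ~~ (T i \subset A)]|.

Lemma nfactors_outD1 P A i : i \in P ->
  nfactors_out P A = (~~ (T i \subset A) + nfactors_out (P :\ i) A)%N.
Proof.
move=> Pi; rewrite /nfactors_out (cardsD1 i) !inE Pi; congr (_ + _)%N.
by apply: eq_card => j; rewrite !inE andbA.
Qed.

Lemma nfactors_outS P A E : E \subset A -> nfactors_out P A <= nfactors_out P E.
Proof.
move=> sEA; apply/subset_leq_card/subsetP=> j; rewrite !inE => /andP[-> /=].
by apply: contra => /subset_trans; apply.
Qed.

Lemma nfactors_out_split P A E :
  nfactors_out P A <=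
    nfactors_out P E + #|[set i in P | (T i \subset E) && ~~ (T i \subset A)]|.
Proof.
apply: leq_trans (leq_card_setU _ _); apply/subset_leq_card/subsetP=> j.
by rewrite !inE => /andP[-> ->]; rewrite andbT orNb.
Qed.

Lemma bigdprodD1 P G i : \big[dprod/1]_(j in P) T j = G -> i \in P ->
  exists2 B : {group gT}, T i \x B = G & \big[dprod/1]_(j in P :\ i) T j = B.
Proof.
move=> defG Pi; rewrite (bigD1 i Pi) /= in defG.
have [[_ B _ defB] _ _ _] := dprodP defG.
exists B; first by rewrite -defB.
by rewrite -defB; apply: eq_bigl => j; rewrite !inE andbC.
Qed.

Lemma bigdprod_cent P G i j : \big[dprod/1]_(l in P) T l = G ->
  i \in P -> j \in P -> i != j -> T j \subset 'C(T i).
Proof.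
move=> defG Pi Pj nij; have [B defTB defB] := bigdprodD1 defG Pi.
have [_ _ cTB _] := dprodP defTB; apply: subset_trans cTB.
by rewrite -(bigdprodWY defB) sub_gen // (bigcup_sup j) // !inE eq_sym nij.
Qed.

Lemma bigdprod_normal P G i : \big[dprod/1]_(j in P) T j = G -> i \in P -> T i <| G.
Proof. by move=> defG /(bigdprodD1 defG)[B /dprod_normal2[]]. Qed.

Lemma bigdprod_abelian P G :
  \big[dprod/1]_(i in P) T i = G -> {in P, forall i, abelian (T i)} -> abelian G.
Proof.
move=> defG abT; elim/big_rec: _ G defG => [G <- | i B Pi IH G defG].
  exact: abelian1.
case/dprodP: defG => [[_ H _ defH]]; rewrite defH => <- cTH _.
by rewrite abelianM abT // cTH (IH H defH).
Qed.

Section InductionStep.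
Variables (P : {set I}) (m : I) (G B H : {group gT}).
Hypotheses (defG : \big[dprod/1]_(i in P) T i = G) (Pm : m \in P).
Hypotheses (defTB : T m \x B = G) (defB : \big[dprod/1]_(i in P :\ m) T i = B).
Hypotheses (simT : simple (T m)) (nabT : ~~ abelian (T m)) (sHG : H \subset G).
Hypothesis IH : forall K, K \subset B -> 5 ^ nfactors_out (P :\ m) K * #|K| <= #|B|.

Lemma card_sub_bigdprod_proj : (T m \subset H) || ~~ (T m \subset H <*> B) ->
  5 ^ nfactors_out P H * #|H| <= #|G|.
Proof.
move=> split_m; rewrite -(dprod_card defTB) (card_sub_dprod defTB sHG).
rewrite (mulnC #|T m|).
set a := ~~ (T m \subset H).
have IHHB := IH (subsetIr H B).
have cnt : nfactors_out P H <= nfactors_out (P :\ m) (H :&: B) + a.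
  by rewrite (nfactors_outD1 _ Pm) addnC leq_add2r nfactors_outS ?subsetIl.
have factor : 5 ^ a * #|T m :&: (H <*> B)| <= #|T m|.
  rewrite /a; case: (boolP (T m \subset H)) => [_ | nsTH].
    by rewrite mul1n subset_leq_card ?subsetIl.
  rewrite (negbTE nsTH) /= in split_m.
  by apply: simple_nonabelian_index_ge5; rewrite // properE subsetIl subsetI subxx.
apply: leq_trans (leq_mul IHHB factor); rewrite mulnACA -expnD.
by rewrite leq_mul2r leq_exp2l ?cnt ?orbT.
Qed.

Lemma card_sub_bigdprod_diag : ~~ (T m \subset H) -> T m \subset H <*> B ->
  5 ^ nfactors_out P H * #|H| <= #|G|.
Proof.
move=> nsTH sT_HB; have [_ _ cTB _] := dprodP defTB.
have nTH c : c \in P -> H \subset 'N(T c).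
  by move=> Pc; rewrite (subset_trans sHG) ?normal_norm ?(bigdprod_normal defG).
have sT_HC : T m \subset H <*> 'C(T m) by rewrite (subset_trans sT_HB) ?genS ?setUS.
have tiHT : H :&: T m = 1.
  rewrite setIC.
  have [//|sTH] := simple_TI_or_sub simT (nTH m Pm) (normG H) sT_HC.
  by rewrite sTH in nsTH.
set Q := (B :&: (H <*> T m))%G.
have cardH : #|H| = #|Q|.
  have defBT : B \x T m = G by rewrite dprodC.
  by rewrite (card_sub_dprod defBT sHG) tiHT cards1 mul1n.
have diag c :
    c \in P :\ m -> T c \subset Q -> ~~ (T c \subset H) -> T m \subset H * T c.
  move=> /setD1P[_ Pc] sTcQ /subsetPn[x Tcx nHx]; rewrite -norm_joinEl ?nTH //.
  have nHTc := normsG (joing_subl H (T c)).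
  have [tiT | //] := simple_TI_or_sub simT (nTH m Pm) nHTc sT_HC.
  have : x \in H * T m.
    by rewrite -norm_joinEl ?nTH // (subsetP (subsetIr B _)) ?(subsetP sTcQ).
  case/mulsgP=> h t Hh Tt def_x; have def_t : t = h^-1 * x by rewrite def_x mulKg.
  have : t \in T m :&: (H <*> T c).
    rewrite inE Tt def_t groupM ?groupV //.
      exact: subsetP (joing_subl _ _) _ Hh.
    exact: subsetP (joing_subr _ _) _ Tcx.
  by rewrite tiT => /set1P t1; rewrite def_x t1 mulg1 Hh in nHx.
have at_most_one : #|[set c in P :\ m | (T c \subset Q) && ~~ (T c \subset H)]| <= 1.
  apply/card_le1_eqP=> c d; rewrite !inE -!in_setD1.
  move=> /and3P[Pc sTcQ nsTcH] /and3P[Pd sTdQ nsTdH]; apply/eqP/negPn/negP=> ndc.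
  have [[ncm Pc'] [ndm Pd']] := (setD1P Pc, setD1P Pd).
  case/negP: nabT.
  apply: (abelian_two_diagonals tiHT (diag c _ _ _) (diag d _ _ _)) => //.
  - by rewrite (bigdprod_cent defG Pm Pc') // eq_sym.
  - by rewrite (bigdprod_cent defG Pm Pd') // eq_sym.
  - by rewrite (bigdprod_cent defG Pc' Pd') // eq_sym.
have cnt : nfactors_out P H <= nfactors_out (P :\ m) Q + 2.
  rewrite (nfactors_outD1 _ Pm) nsTH add1n addn2 ltnS -addn1.
  exact: leq_trans (nfactors_out_split _ H Q) (leq_add (leqnn _) at_most_one).
rewrite cardH -(dprod_card defTB).
have IHQ := IH (subsetIl B (H <*> T m)).
apply: leq_trans (leq_mul (simple_nonabelian_card_ge25 simT nabT) IHQ).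
by rewrite mulnA -[25]/(5 ^ 2)%N -expnD leq_mul2r leq_exp2l // addnC cnt orbT.
Qed.

End InductionStep.

Lemma card_sub_bigdprod_simple P G H :
    \big[dprod/1]_(i in P) T i = G ->
    {in P, forall i, simple (T i) && ~~ abelian (T i)} ->
  H \subset G -> 5 ^ nfactors_out P H * #|H| <= #|G|.
Proof.
have [n leP] := ubnP #|P|; elim: n => // n IHn in P G H leP *.
move=> defG simT sHG; have [P0 | [m Pm]] := set_0Vmem P.
  have -> : nfactors_out P H = 0.
    apply/eqP; rewrite cards_eq0 -subset0 P0.
    by apply/subsetP=> i; rewrite !inE => /andP[].
  move: defG sHG; rewrite P0 big_set0 => <- sH1.
  by rewrite expn0 mul1n subset_leq_card.
have [B defTB defB] := bigdprodD1 defG Pm; have /andP[simTm nabTm] := simT m Pm.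
have IH K : K \subset B -> 5 ^ nfactors_out (P :\ m) K * #|K| <= #|B|.
  apply: IHn defB _; first by rewrite (cardsD1 m) Pm in leP.
  by apply: sub_in1 simT => i /setD1P[].
have [split_m | ] := boolP ((T m \subset H) || ~~ (T m \subset H <*> B)).
  exact: card_sub_bigdprod_proj split_m.
by rewrite negb_or negbK => /andP[]; apply: card_sub_bigdprod_diag.
Qed.

End SimpleFactors.

Section DirectPower.
Variables (gT : finGroupType) (k : nat).
Implicit Types (x y : gpow gT k) (i j : 'I_k) (L N : {group gT}).

Lemma gpowM x y i : (x * y) i = x i * y i.
Proof. by rewrite /= ffunE. Qed.

Lemma gpow1 i : (1 : gpow gT k) i = 1.
Proof. by rewrite /= ffunE. Qed.

Lemma gpowV x i : x^-1 i = (x i)^-1.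
Proof. by rewrite /= ffunE. Qed.

Lemma gpowJ x y i : (x ^ y) i = x i ^ y i.
Proof. by rewrite /conjg !gpowM gpowV. Qed.

Lemma gpow_prod (F : 'I_k -> gpow gT k) j : (\prod_(i < k) F i) j = \prod_(i < k) F i j.
Proof. by elim/big_rec2: _ => [|i y1 y2 _ <-]; rewrite ?gpow1 ?gpowM. Qed.

Definition gpow_inj i (a : gT) : gpow gT k := [ffun j => if j == i then a else 1].

Lemma gpow_injM i : {in [set: gT] &, {morph gpow_inj i : a b / a * b}}.
Proof.
by move=> a b _ _; apply/ffunP=> j; rewrite gpowM !ffunE; case: eqP; rewrite ?mulg1.
Qed.
Canonical gpow_inj_morphism i := Morphism (gpow_injM i).

Lemma injm_gpow_inj i : 'injm (gpow_inj i).
Proof. by apply/injmP=> a b _ _ /(congr1 (fun x => x i)); rewrite !ffunE eqxx. Qed.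

Lemma gpow_injJ i a x : gpow_inj i a ^ x = gpow_inj i (a ^ x i).
Proof.
by apply/ffunP=> j; rewrite gpowJ !ffunE; case: eqP => [-> | _]; rewrite ?conj1g.
Qed.

Lemma gpow_prod_inj x : x = \prod_(i < k) gpow_inj i (x i).
Proof.
apply/ffunP=> j; rewrite gpow_prod (big_only1 j) ?ffunE ?eqxx // => i nij _.
by rewrite ffunE eq_sym (negbTE nij).
Qed.

Lemma setpow_group_set N : group_set (setpow k N).
Proof.
apply/group_setP; split=> [|x y]; rewrite !inE.
  by apply/forallP=> i; rewrite gpow1.
by move=> /forallP xN /forallP yN; apply/forallP=> i; rewrite gpowM groupM.
Qed.
Canonical setpow_group N := Group (setpow_group_set N).

Lemma card_setpow N : #|setpow k N| = (#|N| ^ k)%N.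
Proof.
rewrite -[k in RHS]card_ord -card_ffun_on; apply: eq_card => x.
by rewrite inE; apply/forallP/ffun_onP.
Qed.

Lemma gpow_inj_cent i j N : i != j -> gpow_inj i @* N \subset 'C(gpow_inj j @* N).
Proof.
move=> nij; apply/centsP=> _ /morphimP[a _ _ ->] _ /morphimP[b _ _ ->].
apply/ffunP=> l; rewrite !gpowM !ffunE.
by case: (eqVneq l i) => [-> | _]; rewrite ?(negbTE nij) ?mulg1 ?mul1g.
Qed.

Lemma setpow_bigdprod N : \big[dprod/1]_(i < k) gpow_inj i @* N = setpow k N.
Proof.
apply: bigcprod_card_dprod.
  have /eqP-> : \big[cprod/1]_(i < k) gpow_inj i @* N
                  == (\prod_(i < k) gpow_inj i @* N)%G.
    by apply/bigcprodYP=> i j _ _ nij; rewrite gpow_inj_cent // eq_sym.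
  apply/eqP; rewrite /= bigprodGE eqEsubset gen_subG; apply/andP; split.
    apply/bigcupsP=> i _; apply/subsetP=> _ /morphimP[a _ Na ->].
    by rewrite inE; apply/forallP=> j; rewrite ffunE; case: eqP.
  apply/subsetP=> x; rewrite inE => /forallP xN.
  rewrite (gpow_prod_inj x); apply: group_prod => i _; apply: mem_gen.
  by apply/bigcupP; exists i => //; rewrite mem_morphim ?inE.
rewrite card_setpow -[k in (_ ^ k)%N]card_ord -prod_nat_const.
by apply/leq_prod => i _; rewrite card_injm ?subsetT ?injm_gpow_inj.
Qed.

Lemma crown_power_norm_inj L N i : L \subset 'N(N) ->
  crown_power k L N \subset 'N(gpow_inj i @* N).
Proof.
move=> nNL; apply/subsetP=> x; rewrite !inE => /andP[/forallP xL _].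
apply/subsetP=> _ /imsetP[_ /morphimP[a _ Na ->] ->].
by rewrite gpow_injJ mem_morphim ?inE // memJ_norm ?(subsetP nNL).
Qed.

Lemma gpow_inj_notsub_core_free L N (H : {set gpow gT k}) i :
  L \subset 'N(N) -> N :!=: 1 -> gcore H (crown_power k L N) = 1 ->
  ~~ (gpow_inj i @* N \subset H).
Proof.
move=> nNL ntN coreH; apply: contraNN ntN => sNiH.
have : gpow_inj i @* N \subset gcore H (crown_power k L N).
  apply/bigcapsP=> y /(subsetP (crown_power_norm_inj i nNL))/normP <-.
  by rewrite conjSg.
by rewrite coreH subG1 morphim_injm_eq1 ?subsetT ?injm_gpow_inj.
Qed.

Definition gpow_factors (J : finType) (T : J -> {group gT}) (p : 'I_k * J) :=
  (gpow_inj p.1 @* T p.2)%G.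

Lemma isog_gpow_factors (J : finType) (T : J -> {group gT}) i (c : J) :
  T c \isog gpow_factors T (i, c).
Proof. exact: sub_isog (subsetT _) (injm_gpow_inj i). Qed.

Lemma gpow_inj_bigdprod (J : finType) (P : {set J}) (T : J -> {group gT}) N i :
    \big[dprod/1]_(c in P) T c = N ->
  \big[dprod/1]_(c in P) gpow_factors T (i, c) = gpow_inj i @* N.
Proof. exact: injm_bigdprod (subsetT N) (injm_gpow_inj i). Qed.

Lemma setpow_bigdprod_factors (J : finType) (P : {set J}) (T : J -> {group gT}) N :
    \big[dprod/1]_(c in P) T c = N ->
  \big[dprod/1]_(p in setX [set: 'I_k] P) gpow_factors T p = setpow k N.
Proof.
move=> defN; rewrite -setpow_bigdprod.
rewrite -(eq_bigr _ (fun i _ => gpow_inj_bigdprod i defN)) pair_big /=.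
by apply: eq_big => [p | [i c] _]; rewrite ?inE.
Qed.

Lemma nfactors_out_gpow_factors (J : finType) (P : {set J}) (T : J -> {group gT}) N
    (H : {group gpow gT k}) :
    \big[dprod/1]_(c in P) T c = N -> (forall i, ~~ (gpow_inj i @* N \subset H)) ->
  k <= nfactors_out (gpow_factors T) (setX [set: 'I_k] P) H.
Proof.
move=> defN notsub.
have out i : exists2 c, c \in P & ~~ (gpow_factors T (i, c) \subset H).
  apply/exists_inP; apply: contraR (notsub i).
  rewrite negb_exists_in => /forall_inP subT.
  rewrite -(bigdprodWY (gpow_inj_bigdprod i defN)) gen_subG.
  by apply/bigcupsP=> c Pc; have := subT c Pc; rewrite negbK.
rewrite -[k in k <= _]card_ord -cardsT; apply: leq_trans (leq_imset_card fst _).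
apply/subset_leq_card/subsetP=> i _; have [c Pc nsub] := out i.
by apply/imsetP; exists (i, c); rewrite ?inE ?Pc.
Qed.

End DirectPower.

Lemma Aut_imset_gen (gT : finGroupType) (G S : {group gT}) f (Af : f \in Aut G) :
  S \subset G -> <<f @: S>> = autm Af @* S.
Proof. by move=> sSG; rewrite -{1}(autmE Af) -morphimEsub // genGid. Qed.

Lemma charsimple_bigdprod_simple (gT : finGroupType) (N : {group gT}) :
    charsimple N -> ~~ abelian N ->
  exists T : {perm gT} -> {group gT}, exists2 I : {set {perm gT}},
    \big[dprod/1]_(f in I) T f = N & {in I, forall f, simple (T f) && ~~ abelian (T f)}.
Proof.
move=> chN nabN; have [S [sSN simS [I AutI defN]]] := charsimple_dprod chN.
pose T (f : {perm gT}) := generated_group (f @: S).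
have isoT f : f \in I -> S \isog T f.
  move=> If; have Af := subsetP AutI f If.
  by rewrite /T /= (Aut_imset_gen Af sSN) sub_isog ?injm_autm.
have defNT : \big[dprod/1]_(f in I) T f = N.
  rewrite -defN; apply: eq_bigr => f If; have Af := subsetP AutI f If.
  by rewrite /T /= (Aut_imset_gen Af sSN) morphimEsub // autmE.
have nabS : ~~ abelian S.
  apply: contra nabN => abS; apply: bigdprod_abelian defNT _ => f If.
  by rewrite -(isog_abelian (isoT f If)).
exists T, I => // f If.
by rewrite -(isog_simple (isoT f If)) -(isog_abelian (isoT f If)) simS.
Qed.

Theorem lemma2p1 (gT : finGroupType) (L N : {group gT}) (k : nat)
  (H : {group gpow gT k}) :
  monolithic_primitive L N ->
  ~~ abelian N ->
  0 < k ->
  H \subset setpow k N ->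
  gcore H (crown_power k L N) = 1 ->
  5 ^ k <= #|setpow k N : H|.
Proof.
move=> [_ [/normal_norm nNL minN _]] nabN _ sHN coreH.
have ntN : N :!=: 1 by case/mingroupp/andP: minN.
have [T [I defN simT]] := charsimple_bigdprod_simple (minnormal_charsimple minN) nabN.
have simTk : {in setX [set: 'I_k] I, forall p,
    simple (gpow_factors T p) && ~~ abelian (gpow_factors T p)}.
  move=> [i f]; rewrite !inE => /simT.
  have isoT := isog_gpow_factors T i f.
  by rewrite (isog_simple isoT) (isog_abelian isoT).
have notsub i := gpow_inj_notsub_core_free i nNL ntN coreH.
have le_k := nfactors_out_gpow_factors defN notsub.
apply: leq_trans (leq_pexp2l (isT : 0 < 5) le_k) _.
rewrite -(leq_pmul2l (cardG_gt0 H)) (Lagrange sHN) mulnC.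
exact: card_sub_bigdprod_simple (setpow_bigdprod_factors k defN) simTk sHN.
Qed.
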